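(* Let $Q$ be a symmetric Leibniz algebra and $L$ a semiprime subalgebra of $Q$ such that $Q$ is an algebra of quotients of $L$. Then $\mathscr{A}(Q)$ is a left quotient algebra of $\mathscr{A}_0$.
   Context: A symmetric Leibniz algebra is one satisfying both $[x,[y,z]]=[[x,y],z]-[[x,z],y]$ and $[x,[y,z]]=[[x,y],z]+[y,[x,z]]$. Ideals of $L$ are subspaces $I$ with $[I,L]\subseteq I$, $[L,I]\subseteq I$; $L$ is semiprime if $[I,I]\ne\{0\}$ for every nonzero ideal $I$. For $x\in Q$, $R_x(u)=[u,x]$, $L_x(u)=[x,u]$. $\mathscr{A}(Q)$ is the associative subalgebra of $\mathrm{End}(Q)$ generated by $\{R_x,L_y:x,y\in Q\}$, and $\mathscr{A}_0=\{\mu\in\mathscr{A}(Q):\mu(L)\subseteq L\}$. For $q\in Q$, with $\mathscr{A}_Q(L)$ the subalgebra of $\mathscr{A}(Q)$ generated by $R_x,L_y$ ($x,y\in L$), set ${}_L(q)=\mathbb{F}q+\{\sum\xi_i(q):\xi_i\in\mathscr{A}_Q(L)\}$ and $(L:q)=\{x\in L:[x,{}_L(q)]\subseteq L,[{}_L(q),x]\subseteq L\}$. $Q$ is an algebra of quotients of $L$ if for all $p,q\in Q$ with $p\ne0$ there is $x\in(L:q)$ with $[x,p]\ne0$ or $y\in(L:q)$ with $[p,y]\ne0$. An associative algebra $S$ is a left quotient algebra of a subalgebra $A$ if for all $p,q\in S$ with $p\neq 0$ there exists $x\in A$ with $xp\neq0$ and $xq\in A$. *)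

From mathcomp Require Import all_boot all_algebra.
Set Implicit Arguments. Unset Strict Implicit. Unset Printing Implicit Defensive.
Import GRing.Theory.
Local Open Scope ring_scope.

Section LeibnizDefs.
Variables (F : fieldType) (Q : lmodType F) (br : Q -> Q -> Q).

Definition bilinear_br : Prop :=
  (forall (a : F) x y z, br (a *: x + y) z = a *: br x z + br y z) /\
  (forall (a : F) x y z, br x (a *: y + z) = a *: br x y + br x z).

Definition symmetric_Leibniz : Prop :=
  bilinear_br /\
  (forall x y z, br x (br y z) = br (br x y) z - br (br x z) y) /\
  (forall x y z, br x (br y z) = br (br x y) z + br y (br x z)).

Definition Rop (x : Q) : Q -> Q := fun u => br u x.
Definition Lop (x : Q) : Q -> Q := fun u => br x u.

Inductive gen_alg (S : Q -> Prop) : (Q -> Q) -> Prop :=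
| ga_R x : S x -> gen_alg S (Rop x)
| ga_L x : S x -> gen_alg S (Lop x)
| ga_0 : gen_alg S (fun _ => 0)
| ga_add f g : gen_alg S f -> gen_alg S g -> gen_alg S (fun u => f u + g u)
| ga_scale (a : F) f : gen_alg S f -> gen_alg S (fun u => a *: f u)
| ga_comp f g : gen_alg S f -> gen_alg S g -> gen_alg S (fun u => f (g u)).

Definition AQ : (Q -> Q) -> Prop := gen_alg (fun _ => True).

Definition A0 (L : Q -> Prop) (mu : Q -> Q) : Prop :=
  AQ mu /\ (forall x, L x -> L (mu x)).

Definition subspace (S : Q -> Prop) : Prop :=
  S 0 /\ (forall (a : F) x y, S x -> S y -> S (a *: x + y)).

Definition subalgebra (L : Q -> Prop) : Prop :=
  subspace L /\ (forall x y, L x -> L y -> L (br x y)).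

Definition ideal (L I : Q -> Prop) : Prop :=
  subspace I /\ (forall x, I x -> L x) /\
  (forall x y, I x -> L y -> I (br x y) /\ I (br y x)).

Definition semiprime (L : Q -> Prop) : Prop :=
  forall I, ideal L I -> (exists x, I x /\ x <> 0) ->
    exists a b, I a /\ I b /\ br a b <> 0.

Definition Lhull (L : Q -> Prop) (q u : Q) : Prop :=
  exists (a : F) (s : seq (Q -> Q)),
    (forall i, (i < size s)%N -> gen_alg L (nth (fun _ => 0) s i)) /\
    u = a *: q + \sum_(f <- s) f q.

Definition colon (L : Q -> Prop) (q x : Q) : Prop :=
  L x /\ (forall u, Lhull L q u -> L (br x u) /\ L (br u x)).

Definition quotient_alg (L : Q -> Prop) : Prop :=
  forall p q : Q, p <> 0 ->
    (exists x, colon L q x /\ br x p <> 0) \/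
    (exists y, colon L q y /\ br p y <> 0).

End LeibnizDefs.

Definition left_quotient_alg (T : zmodType) (S A : (T -> T) -> Prop) : Prop :=
  forall p q, S p -> S q -> p <> (fun _ => 0) ->
    exists x, A x /\ (fun u => x (p u)) <> (fun _ => 0) /\ A (fun u => x (q u)).

From mathcomp Require Import all_boot all_algebra.
From Stdlib Require Import Classical FunctionalExtensionality.
Set Implicit Arguments. Unset Strict Implicit. Unset Printing Implicit Defensive.
Import GRing.Theory.
Local Open Scope ring_scope.

(* Since Q is an algebra of quotients of L, no nonzero element of Q is
   annihilated by Q on both sides; the symmetric Leibniz identities make every
   [x,x] such an element, so Q is a Lie algebra.  Call an ideal I of L dense
   when [I,p] <> 0 for every nonzero p in Q; by semiprimeness, an ideal
   containing the product of two dense ideals is dense.  Every mu in A(Q) then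
   has a dense denominator: a dense ideal I and n such that
   ad_{a_n} ... ad_{a_1} mu(L) lies in L for all a_i in I.  This is stable
   under sums, scalars and left composition with ad_y, the latter through the
   dense ideal of those a in I sending _L(y) into I.  Now if p u <> 0 and q has
   denominator (I, n), density yields a_0, ..., a_n in I with
   x = ad_{a_n} ... ad_{a_0} in A_0, x (p u) <> 0 and x (q L) in L. *)

Section Subspace.
Variables (F : fieldType) (Q : lmodType F) (S : Q -> Prop).
Hypothesis S_subspace : subspace S.

Lemma subspace0 : S 0.
Proof. by case: S_subspace. Qed.

Lemma subspace_lin a x y : S x -> S y -> S (a *: x + y).
Proof. by case: S_subspace => _; apply. Qed.

Lemma subspaceD x y : S x -> S y -> S (x + y).
Proof. by move=> Sx Sy; rewrite -[x]scale1r; apply: subspace_lin. Qed.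

Lemma subspaceZ a x : S x -> S (a *: x).
Proof. by move=> Sx; rewrite -[_ *: _]addr0; apply: (subspace_lin _ Sx subspace0). Qed.

Lemma subspaceN x : S x -> S (- x).
Proof. by rewrite -scaleN1r; apply: subspaceZ. Qed.

Lemma subspaceB x y : S x -> S y -> S (x - y).
Proof. by move=> Sx /subspaceN; apply: subspaceD. Qed.

End Subspace.

Lemma subspaceI (F : fieldType) (Q : lmodType F) (S T : Q -> Prop) :
  subspace S -> subspace T -> subspace (fun x => S x /\ T x).
Proof.
move=> HS HT; split; first by split; apply: subspace0.
by move=> a x y [Sx Tx] [Sy Ty]; split; apply: subspace_lin.
Qed.

Lemma quotient_alg_faithful (F : fieldType) (Q : lmodType F) (br : Q -> Q -> Q)
    (L : Q -> Prop) :
  quotient_alg br L -> forall p, p <> 0 -> exists z, br z p <> 0 \/ br p z <> 0.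
Proof.
move=> Lquot p p0.
by have [[z [_ zp]] | [z [_ pz]]] := Lquot p 0 p0; exists z; [left | right].
Qed.

Section Bracket.
Variables (F : fieldType) (Q : lmodType F) (br : Q -> Q -> Q).
Hypothesis br_bilinear : bilinear_br br.

Lemma brDl x y z : br (x + y) z = br x z + br y z.
Proof. by case: br_bilinear => /(_ 1 x y z) + _; rewrite !scale1r. Qed.

Lemma brDr x y z : br z (x + y) = br z x + br z y.
Proof. by case: br_bilinear => _ /(_ 1 z x y); rewrite !scale1r. Qed.

Lemma br0l z : br 0 z = 0.
Proof. by apply: (addrI (br 0 z)); rewrite -brDl !addr0. Qed.

Lemma br0r z : br z 0 = 0.
Proof. by apply: (addrI (br z 0)); rewrite -brDr !addr0. Qed.

Lemma brZl a x z : br (a *: x) z = a *: br x z.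
Proof. by case: br_bilinear => /(_ a x 0 z) + _; rewrite !addr0 br0l addr0. Qed.

Lemma brZr a x z : br z (a *: x) = a *: br z x.
Proof. by case: br_bilinear => _ /(_ a z x 0); rewrite !addr0 br0r addr0. Qed.

Section SymmetricLeibniz.
Hypothesis br_right : forall x y z, br x (br y z) = br (br x y) z - br (br x z) y.
Hypothesis br_left : forall x y z, br x (br y z) = br (br x y) z + br y (br x z).
Hypothesis br_faithful : forall p, p <> 0 -> exists z, br z p <> 0 \/ br p z <> 0.

Lemma brxx x : br x x = 0.
Proof.
apply: NNPP => /br_faithful [z []]; apply.
- by rewrite br_right subrr.
- by apply: (addIr (br x (br x z))); rewrite add0r -br_left.
Qed.

Lemma anticomm x y : br x y = - br y x.
Proof.
have := brxx (x + y); rewrite brDl !brDr !brxx add0r addr0 => /eqP.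
by rewrite addr_eq0 => /eqP.
Qed.

End SymmetricLeibniz.

Section LieQuotient.
Variable L : Q -> Prop.
Hypothesis brN : forall x y, br x y = - br y x.
Hypothesis jacobi : forall x y z, br x (br y z) = br (br x y) z + br y (br x z).
Hypothesis L_subspace : subspace L.
Hypothesis L_br : forall x y, L x -> L y -> L (br x y).
Hypothesis L_semiprime : semiprime br L.
Hypothesis L_quot : quotient_alg br L.

Lemma jacobiB x y z : br (br x y) z = br x (br y z) - br y (br x z).
Proof. by rewrite jacobi addrK. Qed.

Section IdealFacts.
Variable I : Q -> Prop.
Hypothesis I_ideal : ideal br L I.

Lemma ideal_subspace : subspace I.
Proof. by case: I_ideal. Qed.

Lemma ideal_sub x : I x -> L x.
Proof. by case: I_ideal => _ [IL _]; apply: IL. Qed.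

Lemma ideal_brl x l : I x -> L l -> I (br x l).
Proof. by case: I_ideal => _ [_ Ibr] Ix Ll; case: (Ibr x l Ix Ll). Qed.

Lemma ideal_brr x l : I x -> L l -> I (br l x).
Proof. by case: I_ideal => _ [_ Ibr] Ix Ll; case: (Ibr x l Ix Ll). Qed.

End IdealFacts.

Lemma ideal_of_brl I : subspace I -> (forall x, I x -> L x) ->
  (forall x l, I x -> L l -> I (br x l)) -> ideal br L I.
Proof.
move=> Isub IL Ibr; split=> //; split=> // x l Ix Ll.
by split; [exact: Ibr | rewrite brN; exact/(subspaceN Isub)/Ibr].
Qed.

Lemma ideal_L : ideal br L L.
Proof. exact: ideal_of_brl. Qed.

Lemma idealI I J : ideal br L I -> ideal br L J -> ideal br L (fun x => I x /\ J x).
Proof.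
move=> HI HJ; apply: ideal_of_brl.
- exact: (subspaceI (ideal_subspace HI) (ideal_subspace HJ)).
- by move=> x [/(ideal_sub HI)].
- move=> x l [Ix Jx] Ll; split; [exact: (ideal_brl HI Ix Ll) | exact: (ideal_brl HJ Jx Ll)].
Qed.

Definition dense (I : Q -> Prop) : Prop :=
  forall p, p <> 0 -> exists2 a, I a & br a p <> 0.

(* The paper's (I : y): [x] maps _L(y) = F y + A_Q(L) y into [I]. *)
Definition colon_in (I : Q -> Prop) (y x : Q) : Prop :=
  [/\ L x, I (br x y) & forall f, gen_alg br L f -> I (br x (f y))].

Lemma dense_colonL y : dense (colon_in L y).
Proof.
move=> p p0.
have colon_sub c : colon br L y c -> colon_in L y c.
  move=> [Lc Lcu]; split=> //.
    by have [] // := Lcu y; exists 1, [::]; rewrite scale1r big_nil addr0.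
  move=> f Lf; have [] // := Lcu (f y).
  exists 0, [:: f]; rewrite scale0r add0r big_seq1; split=> //.
  by case.
have [[c [Cc cp0]] | [c [Cc pc0]]] := @L_quot p y p0; exists c => //; try exact: colon_sub.
by move=> cp0; apply: pc0; rewrite brN cp0 oppr0.
Qed.

Lemma dense_L : dense L.
Proof. by move=> p /(dense_colonL 0) [c [Lc _ _] cp0]; exists c. Qed.

Lemma ideal_colon_in I y : ideal br L I -> ideal br L (colon_in I y).
Proof.
move=> HI; have Isub := ideal_subspace HI.
apply: ideal_of_brl.
- split=> [|a x z [Lx Ixy Ix] [Lz Izy Iz]].
    by split=> [||f _]; rewrite ?br0l; exact: subspace0.
  split; first exact: subspace_lin.
    by rewrite brDl brZl; apply: subspace_lin.
  by move=> f Lf; rewrite brDl brZl; exact: (subspace_lin Isub _ (Ix f Lf) (Iz f Lf)).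
- by move=> x [].
- move=> x l [Lx Ixy Ix] Ll.
  have brl_in u : I (br x (br l u)) -> I (br x u) -> I (br (br x l) u).
    by move=> Ixlu Ixu; rewrite jacobiB; exact: (subspaceB Isub Ixlu (ideal_brr HI Ixu Ll)).
  split; first exact: L_br.
  + exact: brl_in (Ix _ (ga_L br Ll)) Ixy.
  + by move=> f Lf; apply: brl_in (Ix _ (ga_comp (ga_L br Ll) Lf)) (Ix _ Lf).
Qed.

Lemma colon_in_br I y i c : ideal br L I -> I i -> colon_in L y i -> I c -> colon_in L y c ->
  colon_in I y (br i c).
Proof.
move=> HI Ii [Li Liy Lif] Ic [Lc Lcy Lcf].
have br_in u : L (br c u) -> L (br i u) -> I (br (br i c) u).
  move=> Lcu Liu; rewrite jacobiB.
  exact: (subspaceB (ideal_subspace HI) (ideal_brl HI Ii Lcu) (ideal_brl HI Ic Liu)).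
split; first exact: L_br.
- exact: br_in.
- by move=> f Lf; apply: br_in; [exact: Lcf | exact: Lif].
Qed.

Definition ann (K : Q -> Prop) (x : Q) : Prop := L x /\ forall k, K k -> br x k = 0.

Lemma ideal_ann K : ideal br L K -> ideal br L (ann K).
Proof.
move=> HK; apply: ideal_of_brl.
- split; first by split=> [|k _]; [exact: subspace0 | rewrite br0l].
  move=> a x y [Lx xK] [Ly yK]; split; first exact: subspace_lin.
  by move=> k Kk; rewrite brDl brZl xK // yK // scaler0 addr0.
- by move=> x [].
- move=> x l [Lx xK] Ll; split=> [|k Kk]; first exact: L_br.
  have Kkl : K (br k l) := ideal_brl HK Kk Ll.
  by rewrite brN jacobi [br k x]brN (xK k Kk) (xK _ Kkl) oppr0 br0l !add0r oppr0.
Qed.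

Lemma semiprime_ann K x : ideal br L K -> K x -> ann K x -> x = 0.
Proof.
move=> HK Kx Ax; apply: NNPP => x0.
have [a [b [[_ [_ aK]] [[Kb _] ab0]]]] :=
  L_semiprime (idealI HK (ideal_ann HK)) (ex_intro _ x (conj (conj Kx Ax) x0)).
exact/ab0/aK.
Qed.

Lemma ann_nonzero K p : ideal br L K -> p <> 0 -> (forall k, K k -> br k p = 0) ->
  exists2 e, ann K e & e <> 0.
Proof.
move=> HK p0 Kp; have [c [Lc Lcp _] cp0] := dense_colonL p p0.
exists (br c p) => //; split=> // k Kk.
by rewrite brN jacobi (Kp _ (ideal_brl HK Kk Lc)) (Kp k Kk) br0r add0r oppr0.
Qed.

(* If K is not dense, some nonzero e in L annihilates K; then [a,e] lies in
   I and in ann K for a in I, and its brackets with J lie in K and in ann K,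
   which meet in 0 by semiprimeness. *)
Lemma dense_ideal_br I J K : ideal br L I -> dense I -> ideal br L J -> dense J ->
  ideal br L K -> (forall i j, I i -> J j -> K (br i j)) -> dense K.
Proof.
move=> HI dI HJ dJ HK IJK p p0; apply: NNPP => nKp.
have Kp k : K k -> br k p = 0 by move=> Kk; apply: NNPP => kp0; apply: nKp; exists k.
have [e Ae e0] := ann_nonzero HK p0 Kp; have [Le _] := Ae.
have [a Ia ae0] := dI e e0.
have Aae : ann K (br a e) := ideal_brr (ideal_ann HK) Ae (ideal_sub HI Ia).
have [j Jj jae0] := dJ _ ae0.
have aej0 : br (br a e) j = 0.
  apply: (semiprime_ann HK); first exact/IJK/Jj/(ideal_brl HI Ia Le).
  exact: (ideal_brl (ideal_ann HK) Aae (ideal_sub HJ Jj)).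
by apply: jae0; rewrite brN aej0 oppr0.
Qed.

Lemma dense_idealI I J : ideal br L I -> dense I -> ideal br L J -> dense J ->
  dense (fun x => I x /\ J x).
Proof.
move=> HI dI HJ dJ; apply: (dense_ideal_br HI dI HJ dJ (idealI HI HJ)) => i j Ii Jj.
by split; [exact: (ideal_brl HI Ii (ideal_sub HJ Jj)) | exact: (ideal_brr HJ Jj (ideal_sub HI Ii))].
Qed.

Lemma dense_colon_in I y : ideal br L I -> dense I -> dense (colon_in I y).
Proof.
move=> HI dI.
have HC := ideal_colon_in y ideal_L.
have HK := idealI HI HC.
have dK := dense_idealI HI dI HC (dense_colonL y).
apply: (dense_ideal_br HK dK HK dK (ideal_colon_in y HI)) => i c [Ii Ci] [Ic Cc].
exact: colon_in_br.
Qed.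

Fixpoint ad_word_in_L (I : Q -> Prop) (n : nat) (v : Q) : Prop :=
  if n is n'.+1 then forall a, I a -> ad_word_in_L I n' (br a v) else L v.

Lemma subspace_ad_word I n : subspace (ad_word_in_L I n).
Proof.
elim: n => [|n [IH0 IHlin]]; first exact: L_subspace.
split=> [a _|b v w Hv Hw a Ia]; first by rewrite br0r.
by rewrite brDr brZr; apply: IHlin; [exact: Hv | exact: Hw].
Qed.

Lemma ad_word_in_L_L I n v : (forall x, I x -> L x) -> L v -> ad_word_in_L I n v.
Proof.
move=> IL; elim: n v => [|n IH] v Lv //= a Ia.
by apply: IH; apply: L_br (IL a Ia) Lv.
Qed.

Lemma ad_word_in_L_sub I J n v : (forall x, J x -> I x) ->
  ad_word_in_L I n v -> ad_word_in_L J n v.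
Proof.
move=> JI; elim: n v => [|n IH] v //= Hv a Ja.
by apply: IH; apply: Hv; apply: JI.
Qed.

Lemma ad_word_in_L_leq I m n v : (forall x, I x -> L x) -> (m <= n)%N ->
  ad_word_in_L I m v -> ad_word_in_L I n v.
Proof.
move=> IL; elim: m n v => [|m IH] [|n] v // mn; first exact: (ad_word_in_L_L n.+1 IL).
by move=> Hv a Ia; apply: (IH n _ mn); apply: Hv.
Qed.

Lemma ad_word_in_L_brl I J y n v : ideal br L I -> ideal br L J ->
  (forall x, J x -> I x) -> (forall b, J b -> I (br b y)) ->
  ad_word_in_L I n v -> ad_word_in_L J n.+1 (br y v).
Proof.
move=> HI HJ JI Jy; elim: n v => [|n IH] v Hv b Jb; rewrite jacobi.
- apply: (subspaceD L_subspace (L_br (ideal_sub HI (Jy b Jb)) Hv)).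
  rewrite brN; apply: (subspaceN L_subspace); apply: (ideal_sub HI).
  exact/Jy/(ideal_brl HJ Jb Hv).
- apply: (subspaceD (subspace_ad_word J n.+1)); last exact: (IH _ (Hv b (JI b Jb))).
  apply: (ad_word_in_L_leq (ideal_sub HJ) (leqnSn n)).
  exact: (ad_word_in_L_sub JI (Hv _ (Jy b Jb))).
Qed.

Definition dense_denom (f : Q -> Q) : Prop :=
  exists I n, [/\ ideal br L I, dense I & forall l, L l -> ad_word_in_L I n (f l)].

Lemma dense_denom_ext f g : dense_denom f -> f =1 g -> dense_denom g.
Proof.
move=> [I [n [HI dI Hf]]] fg; exists I, n; split=> // l Ll.
by rewrite -fg; apply: Hf.
Qed.

Lemma dense_denom_id : dense_denom (fun u => u).
Proof. by exists L, 0%N; split=> //; [exact: ideal_L | exact: dense_L]. Qed.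

Lemma dense_denom_add f g : dense_denom f -> dense_denom g ->
  dense_denom (fun u => f u + g u).
Proof.
move=> [I [m [HI dI Hf]]] [J [n [HJ dJ Hg]]].
have HIJ := idealI HI HJ.
exists (fun x => I x /\ J x), (m + n)%N; split=> //; first exact: dense_idealI.
move=> l Ll; apply: (subspaceD (subspace_ad_word _ _)).
- apply: (ad_word_in_L_leq (ideal_sub HIJ) (leq_addr n m)).
  by apply: (ad_word_in_L_sub _ (Hf l Ll)) => x [].
- apply: (ad_word_in_L_leq (ideal_sub HIJ) (leq_addl m n)).
  by apply: (ad_word_in_L_sub _ (Hg l Ll)) => x [].
Qed.

Lemma dense_denom_scale a f : dense_denom f -> dense_denom (fun u => a *: f u).
Proof.
move=> [I [n [HI dI Hf]]]; exists I, n; split=> // l Ll.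
exact/(subspaceZ (subspace_ad_word I n))/Hf.
Qed.

Lemma dense_denom_brl y f : dense_denom f -> dense_denom (fun u => br y (f u)).
Proof.
move=> [I [n [HI dI Hf]]].
have HC := ideal_colon_in y HI.
exists (fun x => I x /\ colon_in I y x), n.+1; split.
- exact: idealI.
- exact: (dense_idealI HI dI HC (dense_colon_in y HI dI)).
- move=> l Ll; apply: (ad_word_in_L_brl HI (idealI HI HC) _ _ (Hf l Ll)).
    by move=> x [].
  by move=> b [_ []].
Qed.

Lemma dense_denom_comp f g : AQ br f -> dense_denom g -> dense_denom (fun u => f (g u)).
Proof.
move=> Af; elim: Af g => {f} [x _|x _||f1 f2 _ IH1 _ IH2|a f _ IH|f1 f2 _ IH1 _ IH2] g Hg.
- apply: (dense_denom_ext (dense_denom_scale (-1) (dense_denom_brl x Hg))) => u.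
  by rewrite scaleN1r /Rop [br (g u) x]brN.
- exact: dense_denom_brl.
- by apply: (dense_denom_ext (dense_denom_scale 0 Hg)) => u; rewrite scale0r.
- exact: (dense_denom_add (IH1 g Hg) (IH2 g Hg)).
- exact: (dense_denom_scale a (IH g Hg)).
- exact: (IH1 _ (IH2 g Hg)).
Qed.

Lemma dense_denom_AQ f : AQ br f -> dense_denom f.
Proof. by move=> Af; apply: (dense_denom_comp Af dense_denom_id). Qed.

(* [n.+1] rather than [n]: A(Q) need not contain the identity. *)
Lemma A0_clear_denominator I n w : ideal br L I -> dense I -> w <> 0 ->
  exists x, [/\ A0 br L x, x w <> 0 & forall v, ad_word_in_L I n.+1 v -> L (x v)].
Proof.
move=> HI dI; elim: n w => [|n IH] w w0; have [a Ia aw0] := dI w w0;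
  have La := ideal_sub HI Ia.
- exists (Lop br a); split=> // [|v]; last by move/(_ a Ia).
  by split=> [|z Lz]; [exact: ga_L | exact: L_br].
- have [x [[AQx xL] xaw0 xv]] := IH _ aw0.
  exists (fun u => x (Lop br a u)); split=> // [|v /(_ a Ia)/xv //].
  by split=> [|z Lz]; [apply: ga_comp AQx _; exact: ga_L | exact/xL/L_br].
Qed.

Lemma AQ_left_quotient_A0 : left_quotient_alg (AQ br) (A0 br L).
Proof.
move=> p q Ap Aq p0.
have [u pu0] : exists u, p u <> 0.
  apply: NNPP => nex; apply: p0; apply: functional_extensionality => u.
  by apply: NNPP => pu0; apply: nex; exists u.
have [I [n [HI dI qI]]] := dense_denom_AQ Aq.
have [x [[AQx xL] xpu0 xI]] := A0_clear_denominator n HI dI pu0.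
exists x; split; first by split.
split; first by move/(congr1 (@^~ u)); exact: xpu0.
split=> [|l Ll]; first exact: ga_comp.
exact/xI/(ad_word_in_L_leq (ideal_sub HI) (leqnSn n))/qI.
Qed.

End LieQuotient.

End Bracket.

Theorem theorem5p11 (F : fieldType) (Q : lmodType F) (br : Q -> Q -> Q)
    (L : Q -> Prop) :
  symmetric_Leibniz br -> subalgebra br L -> semiprime br L ->
  quotient_alg br L ->
  left_quotient_alg (AQ br) (A0 br L).
Proof.
move=> [brB [brR brJ]] [Lsub Lbr] Lsemi Lquot.
have brN := anticomm brB brR brJ (quotient_alg_faithful Lquot).
exact: (AQ_left_quotient_A0 brB brN brJ Lsub Lbr Lsemi Lquot).
Qed.
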